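(* Let $\ell\ge1$, $N\ge1$ be integers and $l\ge1$ real. For $1\le n\le N$ let $A_n=\{1\le m\le N: d_\ell(n,m)\le l\}$, and for integers $k\ge0$ let $\mathcal A_n(k)=\{1\le m\le N: d_\ell(A_n,A_m)=k\}$. Then for all $1\le n\le N$ and $k\ge0$, $$|A_n|\le K_1 l\quad\text{and}\quad|\mathcal A_n(k)|\le K_2 l,$$ with $K_1=3\ell^2$ and $K_2=4\ell^6(\ell^2+2)$.
   Context: For $a,b\in\mathbb R$, $d_\ell(a,b)=\min_{1\le i,j\le\ell}|ia-jb|$, and for $A,B\subset\mathbb R$, $d_\ell(A,B)=\inf\{d_\ell(a,b):a\in A,b\in B\}$. *)

From Stdlib Require Import Reals ZArith List Lia Lra.
Import ListNotations.
Open Scope R_scope.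

(* minimum of a list of integers; default 0 on the empty list
   (never used on an empty list in the theorem below) *)
Definition minZ (s : list Z) : Z :=
  match s with
  | nil => 0%Z
  | x :: t => fold_right Z.min x t
  end.

Definition dl (ell : nat) (a b : Z) : Z :=
  minZ (flat_map (fun i => map (fun j =>
          Z.abs (Z.of_nat i * a - Z.of_nat j * b)%Z) (seq 1 ell)) (seq 1 ell)).

Definition dlset (ell : nat) (A B : list nat) : Z :=
  minZ (flat_map (fun a => map (fun b => dl ell (Z.of_nat a) (Z.of_nat b)) B) A).

Definition An (ell N : nat) (l : R) (n : nat) : list nat :=
  filter (fun m => if Rle_dec (IZR (dl ell (Z.of_nat n) (Z.of_nat m))) l
                   then true else false) (seq 1 N).

Definition calA (ell N : nat) (l : R) (n k : nat) : list nat :=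
  filter (fun m => Z.eqb (dlset ell (An ell N l n) (An ell N l m)) (Z.of_nat k))
         (seq 1 N).

(* If d_l(n, m) <= l, some indices i, j <= ell satisfy |j m - i n| <= l, so m lies
   in an interval of length 2l/j, which holds at most 2l + 1 <= 3l integers; there
   are ell^2 index pairs.  If d_l(A_n, A_m) = k, pick a in A_n and b in A_m with
   |i a - j b| = k, |i1 n - j1 a| <= l and |i2 m - j2 b| <= l.  Eliminating a and b
   gives |i2 j j1 m - (j2 i i1 n - s j2 j1 k)| <= l (j j1 + j2 i) for a sign s, again
   an interval, now of at most (2 ell^2 + 3) l integers, for each of the 2 ell^6
   choices of the indices and of s. *)

From Stdlib Require Import Reals ZArith List Lia Lra.
Import ListNotations.
Open Scope R_scope.

Lemma minZ_le (s : list Z) (x : Z) : In x s -> (minZ s <= x)%Z.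
Proof.
  destruct s as [|y t]; [intros []|]. simpl. revert x.
  induction t as [|z t IH]; intros x H; simpl in *.
  - destruct H as [<-|[]]; lia.
  - destruct H as [H|[H|H]]; subst.
    + specialize (IH x (or_introl eq_refl)); lia.
    + lia.
    + specialize (IH x (or_intror H)); lia.
Qed.

Lemma minZ_In (s : list Z) : s <> nil -> In (minZ s) s.
Proof.
  destruct s as [|y t]; [congruence|]. intros _. simpl.
  induction t as [|z t IH]; simpl in *; [now left|].
  destruct (Z.min_spec z (fold_right Z.min y t)) as [[_ ->]|[_ ->]]; [now right; left|].
  destruct IH as [IH|IH]; [now left|now right; right].
Qed.

Lemma IZR_dl_term (i j a b : nat) :
  IZR (Z.abs (Z.of_nat i * Z.of_nat a - Z.of_nat j * Z.of_nat b))
  = Rabs (INR i * INR a - INR j * INR b).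
Proof. now rewrite abs_IZR, minus_IZR, !mult_IZR, <- !INR_IZR_INZ. Qed.

Lemma dl_le_term (ell i j a b : nat) : (1 <= i <= ell)%nat -> (1 <= j <= ell)%nat ->
  IZR (dl ell (Z.of_nat a) (Z.of_nat b)) <= Rabs (INR i * INR a - INR j * INR b).
Proof.
  intros Hi Hj. rewrite <- IZR_dl_term. apply IZR_le, minZ_le, in_flat_map.
  exists i. split; [apply in_seq; lia|].
  apply in_map_iff. exists j. split; [reflexivity|apply in_seq; lia].
Qed.

Lemma dl_attained (ell a b : nat) : (1 <= ell)%nat ->
  exists i j, (1 <= i <= ell)%nat /\ (1 <= j <= ell)%nat /\
    IZR (dl ell (Z.of_nat a) (Z.of_nat b)) = Rabs (INR i * INR a - INR j * INR b).
Proof.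
  intros Hell. unfold dl.
  set (L := flat_map _ _).
  assert (HL : L <> nil) by (destruct ell as [|e]; [lia|]; discriminate).
  apply minZ_In, in_flat_map in HL as [i [Hi Hj]].
  apply in_map_iff in Hj. destruct Hj as [j [Ej Hj]].
  apply in_seq in Hi, Hj.
  exists i, j. split; [lia|split; [lia|]]. now rewrite <- Ej, IZR_dl_term.
Qed.

Lemma dlset_attained (ell : nat) (A B : list nat) : A <> nil -> B <> nil ->
  exists a b, In a A /\ In b B /\ dlset ell A B = dl ell (Z.of_nat a) (Z.of_nat b).
Proof.
  intros HA HB. unfold dlset.
  set (L := flat_map _ _).
  assert (HL : L <> nil).
  { destruct A as [|a0 A]; [congruence|]. destruct B as [|b0 B]; [congruence|].
    discriminate. }
  apply minZ_In, in_flat_map in HL as [a [Ha Hb]].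
  apply in_map_iff in Hb. destruct Hb as [b [Eb Hb]].
  now exists a, b.
Qed.

Lemma In_An (ell N : nat) (l : R) (n m : nat) :
  In m (An ell N l n) <-> (1 <= m <= N)%nat /\ IZR (dl ell (Z.of_nat n) (Z.of_nat m)) <= l.
Proof.
  unfold An. rewrite filter_In, in_seq.
  destruct (Rle_dec _ _); split; intros [H1 H2]; split; easy || lia.
Qed.

Lemma In_An_self (ell N : nat) (l : R) (n : nat) :
  (1 <= ell)%nat -> 0 <= l -> (1 <= n <= N)%nat -> In n (An ell N l n).
Proof.
  intros Hell Hl Hn. apply In_An. split; [exact Hn|].
  eapply Rle_trans; [apply (dl_le_term ell 1 1); lia|].
  rewrite Rminus_diag, Rabs_R0. exact Hl.
Qed.

Lemma In_An_near (ell N : nat) (l : R) (n m : nat) : (1 <= ell)%nat ->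
  In m (An ell N l n) -> exists i j, (1 <= i <= ell)%nat /\ (1 <= j <= ell)%nat /\
    Rabs (INR i * INR n - INR j * INR m) <= l.
Proof.
  intros Hell [_ Hm]%In_An.
  destruct (dl_attained ell n m Hell) as [i [j [Hi [Hj E]]]].
  exists i, j. rewrite <- E. auto.
Qed.

Lemma NoDup_An (ell N : nat) (l : R) (n : nat) : NoDup (An ell N l n).
Proof. apply NoDup_filter, seq_NoDup. Qed.

Lemma NoDup_calA (ell N : nat) (l : R) (n k : nat) : NoDup (calA ell N l n k).
Proof. apply NoDup_filter, seq_NoDup. Qed.

Lemma union_bound {A T : Type} (L : list A) (f : T -> list A) (Ts : list T) (B : R) :
  NoDup L -> (forall x, In x L -> exists t, In t Ts /\ In x (f t)) ->
  (forall t, In t Ts -> INR (length (f t)) <= B) ->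
  INR (length L) <= INR (length Ts) * B.
Proof.
  intros HL Hcover Hf.
  apply Rle_trans with (INR (length (flat_map f Ts))).
  { apply le_INR, NoDup_incl_length; [exact HL|].
    intros x Hx. apply in_flat_map, Hcover, Hx. }
  clear L HL Hcover. induction Ts as [|t Ts IH]; [simpl; lra|].
  cbn [flat_map length]. rewrite length_app, plus_INR, S_INR.
  pose proof (Hf t (or_introl eq_refl)).
  specialize (IH (fun t' Ht' => Hf t' (or_intror Ht'))). lra.
Qed.

Lemma length_filter_seq_bounded (P : nat -> bool) (lo hi : R) :
  (forall m, P m = true -> lo <= INR m <= hi) ->
  forall len a, INR (length (filter P (seq a len))) <= Rmax 0 (hi - Rmax lo (INR a) + 1).
Proof.
  intros HP len. induction len as [|len IH]; intros a; [apply Rmax_l|].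
  cbn [seq filter]. specialize (IH (S a)). rewrite S_INR in IH.
  destruct (P a) eqn:Ea; cbn [length]; [rewrite S_INR; apply HP in Ea|];
    unfold Rmax in *; repeat destruct Rle_dec; lra.
Qed.

Definition near (c x w : R) (m : nat) : bool :=
  if Rle_dec (Rabs (c * INR m - x)) w then true else false.

Lemma In_filter_near (c x w : R) (m : nat) (s : list nat) :
  In m s -> Rabs (c * INR m - x) <= w -> In m (filter (near c x w) s).
Proof.
  intros Hm Hw. apply filter_In. split; [exact Hm|].
  unfold near. now destruct Rle_dec.
Qed.

Lemma Rdiv_le_mono (a b c : R) : 0 < c -> a <= b -> a / c <= b / c.
Proof. intros Hc Hab. apply Rmult_le_compat_r; [apply Rlt_le, Rinv_0_lt_compat|]; lra. Qed.

Lemma Rdiv_le_of_le_mul (a b c : R) : 0 < c -> a <= b * c -> a / c <= b.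
Proof. intros Hc H. replace b with ((b * c) / c) by (field; lra). now apply Rdiv_le_mono. Qed.

Lemma length_filter_near (c x w : R) (len a : nat) : 0 < c -> 0 <= w ->
  INR (length (filter (near c x w) (seq a len))) <= 2 * (w / c) + 1.
Proof.
  intros Hc Hw.
  eapply Rle_trans.
  { apply (length_filter_seq_bounded _ ((x - w) / c) ((x + w) / c)).
    intros m Hm. unfold near in Hm. destruct Rle_dec as [H|]; [|discriminate].
    replace (INR m) with ((c * INR m) / c) by (field; lra).
    revert H; unfold Rabs; destruct Rcase_abs; split; apply Rdiv_le_mono; lra. }
  assert (0 <= w / c) by (apply Rmult_le_pos; [|apply Rlt_le, Rinv_0_lt_compat]; lra).
  replace ((x + w) / c) with ((x - w) / c + 2 * (w / c)) by (field; lra).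
  unfold Rmax. repeat destruct Rle_dec; lra.
Qed.

Lemma length_An_le (ell N : nat) (l : R) (n : nat) : (1 <= ell)%nat -> 1 <= l ->
  INR (length (An ell N l n)) <= 3 * INR ell ^ 2 * l.
Proof.
  intros Hell Hl.
  set (Ts := list_prod (seq 1 ell) (seq 1 ell)).
  replace (3 * INR ell ^ 2 * l) with (INR (length Ts) * (3 * l))
    by (unfold Ts; rewrite length_prod, length_seq, mult_INR; ring).
  apply (union_bound _ (fun '(i, j) => filter (near (INR j) (INR i * INR n) l) (seq 1 N))).
  - apply NoDup_An.
  - intros m Hm. destruct (In_An_near ell N l n m Hell Hm) as [i [j [Hi [Hj Hij]]]].
    apply In_An in Hm as [HmN _].
    exists (i, j). split; [apply in_prod; apply in_seq; lia|].
    apply In_filter_near; [apply in_seq; lia|]. now rewrite Rabs_minus_sym.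
  - intros [i j] [_ Hj]%in_prod_iff. apply in_seq in Hj.
    assert (1 <= INR j) by (apply (le_INR 1); lia).
    eapply Rle_trans; [apply length_filter_near; lra|].
    enough (l / INR j <= l) by lra.
    apply Rdiv_le_of_le_mul; nra.
Qed.

Lemma In_calA (ell N : nat) (l : R) (n k m : nat) :
  In m (calA ell N l n k) <->
  (1 <= m <= N)%nat /\ dlset ell (An ell N l n) (An ell N l m) = Z.of_nat k.
Proof.
  unfold calA. rewrite filter_In, in_seq, Z.eqb_eq.
  split; intros [H1 H2]; split; easy || lia.
Qed.

Lemma Rabs_eq_sign (x y : R) : Rabs x = y -> exists s, In s [1; -1] /\ x = s * y.
Proof.
  unfold Rabs. destruct Rcase_abs; intros <-.
  - exists (-1). split; [right; left|]; ring.
  - exists 1. split; [left|]; ring.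
Qed.

Lemma Rabs_eliminate (n a b m i j i1 j1 i2 j2 s k l : R) :
  0 <= i -> 0 <= j -> 0 <= j1 -> 0 <= j2 ->
  Rabs (i1 * n - j1 * a) <= l -> Rabs (i2 * m - j2 * b) <= l -> i * a - j * b = s * k ->
  Rabs (i2 * j * j1 * m - (j2 * i * i1 * n - j2 * j1 * (s * k))) <= l * (j * j1 + j2 * i).
Proof.
  intros Hi Hj Hj1 Hj2 Ha Hb <-.
  replace (i2 * j * j1 * m - (j2 * i * i1 * n - j2 * j1 * (i * a - j * b)))
    with ((j * j1) * (i2 * m - j2 * b) + - ((j2 * i) * (i1 * n - j1 * a))) by ring.
  eapply Rle_trans; [apply Rabs_triang|].
  rewrite Rabs_Ropp, !Rabs_mult, (Rabs_pos_eq j), (Rabs_pos_eq j1), (Rabs_pos_eq j2),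
    (Rabs_pos_eq i) by assumption.
  pose proof (Rmult_le_compat_l (j * j1) _ _ ltac:(nra) Hb).
  pose proof (Rmult_le_compat_l (j2 * i) _ _ ltac:(nra) Ha). lra.
Qed.

Lemma index_ratio_le (ell i j j1 i2 j2 : nat) :
  (1 <= i <= ell)%nat -> (1 <= j <= ell)%nat -> (1 <= j1 <= ell)%nat ->
  (1 <= i2 <= ell)%nat -> (1 <= j2 <= ell)%nat ->
  INR j * INR j1 + INR j2 * INR i <= (INR ell ^ 2 + 1) * (INR i2 * INR j * INR j1).
Proof.
  intros Hi Hj Hj1 Hi2 Hj2.
  replace (INR ell ^ 2 + 1) with (INR (ell * ell + 1)) by (rewrite plus_INR, mult_INR; simpl; ring).
  rewrite <- !mult_INR, <- plus_INR. apply le_INR. nia.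
Qed.

Lemma length_calA_le (ell N : nat) (l : R) (n k : nat) :
  (1 <= ell)%nat -> 1 <= l -> (1 <= n <= N)%nat ->
  INR (length (calA ell N l n k)) <= 4 * INR ell ^ 6 * (INR ell ^ 2 + 2) * l.
Proof.
  intros Hell Hl Hn.
  set (I2 := list_prod (seq 1 ell) (seq 1 ell)).
  set (Ts := list_prod (list_prod (list_prod I2 I2) I2) [1; -1]).
  apply Rle_trans with (INR (length Ts) * ((2 * INR ell ^ 2 + 3) * l)).
  2: { unfold Ts, I2. rewrite !length_prod, !length_seq, !mult_INR. simpl length.
       assert (0 <= INR ell ^ 6 * l) by (apply Rmult_le_pos; [apply pow_le, pos_INR|lra]).
       simpl INR. simpl pow in *. nra. }
  apply (union_bound _ (fun '((((i1, j1), (i, j)), (i2, j2)), s) =>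
    filter (near (INR i2 * INR j * INR j1)
                 (INR j2 * INR i * INR i1 * INR n - INR j2 * INR j1 * (s * INR k))
                 (l * (INR j * INR j1 + INR j2 * INR i))) (seq 1 N))).
  - apply NoDup_calA.
  - intros m Hm. apply In_calA in Hm as [HmN Hk].
    destruct (dlset_attained ell (An ell N l n) (An ell N l m)) as [a [b [Ha [Hb Hab]]]].
    1, 2: intros E; eapply in_nil; rewrite <- E; apply In_An_self; lia || lra.
    destruct (In_An_near ell N l n a Hell Ha) as [i1 [j1 [Hi1 [Hj1 Hna]]]].
    destruct (In_An_near ell N l m b Hell Hb) as [i2 [j2 [Hi2 [Hj2 Hmb]]]].
    destruct (dl_attained ell a b Hell) as [i [j [Hi [Hj Hdl]]]].
    rewrite <- Hab, Hk, <- INR_IZR_INZ in Hdl.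
    destruct (Rabs_eq_sign _ _ (eq_sym Hdl)) as [s [Hs Hsign]].
    exists ((((i1, j1), (i, j)), (i2, j2)), s). split.
    + unfold Ts, I2. repeat apply in_prod; (apply in_seq; lia) || exact Hs.
    + apply In_filter_near; [apply in_seq; lia|].
      apply (Rabs_eliminate _ (INR a) (INR b)); auto using pos_INR.
  - intros [[[[i1 j1] [i j]] [i2 j2]] s] Ht.
    unfold Ts, I2 in Ht. rewrite !in_prod_iff, !in_seq in Ht.
    destruct Ht as [[[[Hi1 Hj1] [Hi Hj]] [Hi2 Hj2]] _].
    assert (1 <= INR i2 * INR j * INR j1).
    { rewrite <- !mult_INR. apply (le_INR 1). nia. }
    pose proof (index_ratio_le ell i j j1 i2 j2 ltac:(lia) ltac:(lia) ltac:(lia) ltac:(lia) ltac:(lia)).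
    assert (0 <= INR j * INR j1 + INR j2 * INR i)
      by (apply Rplus_le_le_0_compat; apply Rmult_le_pos; apply pos_INR).
    eapply Rle_trans; [apply length_filter_near; nra|].
    enough (l * (INR j * INR j1 + INR j2 * INR i) / (INR i2 * INR j * INR j1)
            <= l * (INR ell ^ 2 + 1)) by lra.
    apply Rdiv_le_of_le_mul; nra.
Qed.

Theorem mainTheorem6 (ell N : nat) (l : R)
  (hell : (1 <= ell)%nat) (hN : (1 <= N)%nat) (hl : 1 <= l) :
  forall n : nat, (1 <= n <= N)%nat -> forall k : nat,
    INR (length (An ell N l n)) <= 3 * INR ell ^ 2 * l /\
    INR (length (calA ell N l n k)) <= 4 * INR ell ^ 6 * (INR ell ^ 2 + 2) * l.
Proof.
  intros n Hn k. split.
  - now apply length_An_le.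
  - now apply length_calA_le.
Qed.
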